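(* Let $x \geq 1$ be an integer. For $m \geq 1$ let $N(m,x)$ denote the number of binary words of length $m$ that contain none of the patterns in $\mathcal{T}_x = \{0\mathbf{1}^y0,\ 1\mathbf{0}^y1 : 1 \leq y \leq x\}$ as a substring of consecutive bits, and set by convention $N(m,x) \triangleq 2$ for all integers $m \leq 1$. Then for every $m \geq 2$, $$N(m,x) = N(m-1,x) + N(m-x-1,x).$$
   Context: $\mathbf{0}^r$ (resp. $\mathbf{1}^r$) denotes a run of $r$ consecutive $0$'s (resp. $1$'s). A pattern is contained in a word if it appears as a contiguous block of consecutive bits. Note that for $m=1$ the convention value $2$ coincides with the actual count of binary words of length $1$. *)

From mathcomp Require Import all_boot all_order all_algebra.
Set Implicit Arguments. Unset Strict Implicit. Unset Printing Implicit Defensive.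

(* pattern 0 1^y 0  (false = bit 0, true = bit 1) *)
Definition pat010 (y : nat) : seq bool := [:: false] ++ nseq y true ++ [:: false].
Definition pat101 (y : nat) : seq bool := [:: true] ++ nseq y false ++ [:: true].

Definition avoidsT (x : nat) (w : seq bool) : bool :=
  all (fun y => ~~ infix (pat010 y) w && ~~ infix (pat101 y) w) (iota 1 x).

Definition Ncount (m x : nat) : nat :=
  #|[set w : m.-tuple bool | avoidsT x w]|.

Definition N (m : int) (x : nat) : nat :=
  match m with
  | Posz n => if (n <= 1)%N then 2 else Ncount n x
  | Negz _ => 2
  end.

From mathcomp Require Import all_boot all_order all_algebra.
From mathcomp Require Import zify.

(* Prepending a letter c to a T_x-avoiding word w yields a T_x-avoiding word
   iff c is the first letter of w, or the first x+1 letters of w agree (the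
   first run of w is longer than x, or is all of w).  Hence
   N(n+1) = N(n) + G(n), where G(n) counts the avoiding words of length n whose
   first x+1 letters agree.  For 1 <= n <= x+1 these are the two constant
   words; for n = x + k with k >= 1 they are exactly the words a^x z with z
   avoiding of length k and starting with a, so G(x+k) = N(k). *)

Lemma count_bij {T U : eqType} {s : seq T} {t : seq U} {P : pred T} {Q : pred U}
    (f : T -> U) (g : U -> T) :
  uniq s -> uniq t ->
  {in filter P s, cancel f g} -> {in filter Q t, cancel g f} ->
  {in filter P s, forall a, f a \in filter Q t} ->
  {in filter Q t, forall b, g b \in filter P s} ->
  count P s = count Q t.
Proof.
move=> s_uniq t_uniq fK gK f_in g_in.
rewrite -!size_filter -(size_map f); apply/perm_size/uniq_perm.
- by rewrite (map_inj_in_uniq (can_in_inj fK)) filter_uniq.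
- exact: filter_uniq.
move=> b; apply/mapP/idP => [[a a_in ->]|b_in]; first exact: f_in.
by exists (g b); rewrite ?gK ?g_in.
Qed.

Fixpoint words n : seq (seq bool) :=
  if n is n'.+1 then map (cons true) (words n') ++ map (cons false) (words n')
  else [:: [::]].

Lemma mem_map_cons (T : eqType) (c b : T) (s : seq (seq T)) w :
  (b :: w \in map (cons c) s) = (b == c) && (w \in s).
Proof. by apply/mapP/andP => [[v v_in [-> ->]]|[/eqP -> w_in]]; last exists w. Qed.

Lemma nil_notin_map_cons (T : eqType) (c : T) (s : seq (seq T)) :
  [::] \notin map (cons c) s.
Proof. by apply/mapP => -[]. Qed.

Lemma mem_words n w : (w \in words n) = (size w == n).
Proof.
elim: n w => [|n IHn] [|b w] //=; rewrite mem_cat.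
  by rewrite !(negbTE (nil_notin_map_cons _ _ _)).
by rewrite !mem_map_cons IHn eqSS; case: b; rewrite /= ?orbF.
Qed.

Lemma uniq_words n : uniq (words n).
Proof.
elim: n => [|n IHn] //=.
have cons_inj c : injective (@cons bool c) by move=> ? ? [].
rewrite cat_uniq !map_inj_uniq // IHn andbT.
apply/hasPn => -[|b w]; rewrite ?nil_notin_map_cons // mem_map_cons.
by case: b; rewrite //= mem_map_cons.
Qed.

Lemma card_tuples_words n (P : pred (seq bool)) :
  #|[set w : n.-tuple bool | P w]| = count P (words n).
Proof.
have tuples_words : perm_eq (map val (enum {: n.-tuple bool})) (words n).
  apply: uniq_perm; rewrite ?uniq_words ?(map_inj_uniq val_inj) ?enum_uniq //.
  move=> w; rewrite mem_words; apply/mapP/eqP => [[t _ ->]|w_size].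
    exact: size_tuple.
  by exists (Tuple (introT eqP w_size)); rewrite ?mem_enum.
rewrite -(permP tuples_words) count_map cardsE cardE -size_filter.
by rewrite enumT /enum_mem.
Qed.

Definition long_first_run x (w : seq bool) : bool :=
  all (pred1 (head false w)) (take x.+1 w).

Lemma all_nprefix_run (a : bool) x w :
  all (fun y => ~~ prefix (nseq y a ++ [:: ~~ a]) w) (iota 0 x) =
  all (pred1 a) (take x w).
Proof.
elim: x w => [|x IHx] [|b w] //=.
  by apply/allP => -[|y] _.
rewrite -[iota 1 x]/(iota (1 + 0) x) iotaDl all_map -IHx /= prefix0s andbT.
have [-> | /negPf b_ne_a] := eqVneq b a; last by case: a b b_ne_a {IHx} => -[].
have -> : (~~ a != a) by case: (a) {IHx}.
by apply: eq_all => y; rewrite /= eqxx.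
Qed.

Lemma avoidsT_cons x c w :
  avoidsT x (c :: w) = avoidsT x w && ((c == head false w) || long_first_run x w).
Proof.
have split_patterns y :
  ~~ infix (pat010 y) (c :: w) && ~~ infix (pat101 y) (c :: w) =
  (~~ infix (pat010 y) w && ~~ infix (pat101 y) w) &&
  ~~ (prefix (pat010 y) (c :: w) || prefix (pat101 y) (c :: w)).
  by rewrite !infix_consl !negb_or andbACA andbC.
rewrite /avoidsT (eq_all split_patterns) all_predI {split_patterns}; congr andb.
rewrite -[iota 1 x]/(iota (1 + 0) x) iotaDl all_map /long_first_run.
case: w => [|b w]; first by rewrite orbT; apply/allP => y; case: c.
have [<- | c_ne_b] := eqVneq c b; first by apply/allP => y; case: c.
rewrite /= eqxx -all_nprefix_run; apply: eq_all => y.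
by case: b c c_ne_b => -[] //= _; rewrite orbF.
Qed.

Lemma avoidsT_nil x : avoidsT x [::].
Proof. by apply/allP. Qed.

Lemma avoidsT_suffix x s w : avoidsT x (s ++ w) -> avoidsT x w.
Proof. by elim: s => //= c s IHs; rewrite avoidsT_cons => /andP[/IHs]. Qed.

Lemma avoidsT_nseq_cat x a n w :
  avoidsT x w -> head a w = a -> avoidsT x (nseq n a ++ w).
Proof.
move=> w_avoids w_head; elim: n => [|n IHn] //=.
rewrite avoidsT_cons IHn; case: n {IHn} => [|n] /=; last by rewrite eqxx.
by case: w w_avoids w_head => [|b w] _ /= => [_|->]; rewrite ?eqxx /long_first_run ?orbT.
Qed.

Lemma long_first_run_nseq_cat x w : long_first_run x (nseq x (head false w) ++ w).
Proof.
rewrite /long_first_run take_cat size_nseq ltnNge leqnSn subSnn /= all_cat.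
have -> : head false (nseq x (head false w) ++ w) = head false w by case: x.
by rewrite all_pred1_nseq; case: w => [|b w] //=; rewrite eqxx take0.
Qed.

Lemma long_first_run_split x w :
  x < size w -> long_first_run x w -> nseq x (head false (drop x w)) ++ drop x w = w.
Proof.
move=> x_lt_w /all_pred1P; rewrite size_takel // => take_w.
have -> : head false (drop x w) = head false w.
  by rewrite -nth0 nth_drop addn0 -(nth_take _ (ltnSn x)) take_w nth_nseq ltnSn.
by rewrite -{3}(cat_take_drop x w) -(take_takel _ (leqnSn x)) take_w take_nseq.
Qed.

Lemma count_avoidsT_succ x n :
  count (avoidsT x) (words n.+1) =
  count (avoidsT x) (words n) + count (predI (avoidsT x) (long_first_run x)) (words n).
Proof.
rewrite /= count_cat !count_map -count_predUI.
congr (_ + _); apply: eq_count => w; rewrite /= !avoidsT_cons;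
  by case: avoidsT; case: head; case: long_first_run.
Qed.

Lemma count_long_first_run_small x n : 0 < n <= x.+1 ->
  count (predI (avoidsT x) (long_first_run x)) (words n) = 2.
Proof.
case/andP=> n_gt0 n_le; rewrite -[2]/(count predT [:: true; false]); symmetry.
apply: (count_bij (nseq n) (head false)); rewrite ?uniq_words //.
- by move=> a _; case: n n_gt0 {n_le}.
- move=> w; rewrite mem_filter mem_words => /andP[/andP[_ w_run] /eqP w_size].
  move: w_run; rewrite /long_first_run take_oversize ?w_size //.
  by move=> /all_pred1P; rewrite w_size => /esym.
- move=> a _; rewrite mem_filter mem_words size_nseq eqxx andbT /=.
  rewrite -[nseq n a]cats0 avoidsT_nseq_cat ?avoidsT_nil //= cats0.
  rewrite /long_first_run take_oversize ?size_nseq //.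
  by case: n n_gt0 {n_le} => //= n _; rewrite eqxx all_pred1_nseq.
- by move=> w _; rewrite mem_filter; case: head.
Qed.

Lemma count_long_first_run_large x k : 0 < k ->
  count (predI (avoidsT x) (long_first_run x)) (words (x + k)) =
  count (avoidsT x) (words k).
Proof.
move=> k_gt0; symmetry.
apply: (count_bij (fun w => nseq x (head false w) ++ w) (drop x)); rewrite ?uniq_words //.
- by move=> w _; apply: drop_size_cat; rewrite size_nseq.
- move=> w; rewrite mem_filter mem_words => /andP[/andP[_ w_run] /eqP w_size].
  by apply: long_first_run_split w_run; rewrite w_size -addn1 leq_add2l.
- move=> w; rewrite mem_filter mem_words => /andP[w_avoids /eqP w_size].
  rewrite mem_filter mem_words size_cat size_nseq w_size eqxx andbT /=.
  rewrite long_first_run_nseq_cat andbT avoidsT_nseq_cat //.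
  by case: w w_size {w_avoids} k_gt0 => [<-|].
- move=> w; rewrite !mem_filter !mem_words => /andP[/andP[w_avoids _] /eqP w_size].
  rewrite size_drop w_size addKn eqxx andbT.
  by apply: (@avoidsT_suffix x (take x w)); rewrite cat_take_drop.
Qed.

Lemma N_le1 x (z : int) : (z <= 1)%R -> N z x = 2.
Proof. by case: z => [n|n] //=; rewrite lez_nat => ->. Qed.

Lemma N_words x n : 0 < n -> N n x = count (avoidsT x) (words n).
Proof.
move=> n_gt0; rewrite /N /Ncount card_tuples_words; case: ifP => // n_le1.
have -> : n = 1 by apply/eqP; rewrite eqn_leq n_le1.
by rewrite /= !avoidsT_cons avoidsT_nil /long_first_run !orbT.
Qed.

Local Open Scope ring_scope.

Theorem theorem1 (x : nat) (m : int) :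
  (1 <= x)%N -> 2 <= m ->
  N m x = (N (m - 1) x + N (m - x%:Z - 1) x)%N.
Proof.
(* The recursion holds for x = 0 as well. *)
move=> _; case: m => [[|p]|//]; rewrite // lez_nat ltnS => p_gt0.
have -> : p.+1%:Z - 1 = p by lia.
rewrite !N_words // count_avoidsT_succ; congr (_ + _)%N.
have [p_le_x | x_lt_p] := leqP p x.
  by rewrite N_le1 ?count_long_first_run_small //; lia.
have [k k_gt0 ->] : exists2 k, (0 < k)%N & p = (x + k)%N by exists (p - x)%N; lia.
rewrite count_long_first_run_large // -N_words //; congr N; lia.
Qed.
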